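(* Let $t$ be a positive integer. Let $\overline{\mathcal{G}}_t$ be the set of nonempty overpartitions whose largest and smallest parts differ by at most $t$, and whose largest part is not overlined whenever this difference is exactly $t$. Let $\overline{\mathcal{P}}_t$ be the set of nonempty overpartitions all of whose parts are at most $t$ and in which no part equal to $t$ is overlined. Define $\phi$ on $\overline{\mathcal{G}}_t$ as follows: for $\pi=(\pi_1,\dots,\pi_\ell)\in\overline{\mathcal{G}}_t$ (parts weakly decreasing), let $s=\lfloor \pi_\ell/t\rfloor$, and let $k$ be the positive integer with $\pi_k\ge (s+1)t>\pi_{k+1}$ if such an integer exists, and $k=0$ otherwise. Set \[ \phi(\pi)=(\underbrace{t,\dots,t}_{s(\ell-k)+(s+1)k},\ \pi_{k+1}-st,\dots,\pi_\ell-st,\ \pi_1-(s+1)t,\dots,\pi_k-(s+1)t), \] where the parts equal to $t$ listed first are not overlined, each part $\pi_i-st$ or $\pi_i-(s+1)t$ is overlined exactly when $\pi_i$ is overlined, and afterwards all parts equal to $0$ are deleted. Then $\phi(\pi)\in\overline{\mathcal{P}}_t$ for every $\pi\in\overline{\mathcal{G}}_t$, and $|\phi(\pi)|=|\pi|$.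
   Context: An overpartition is a partition (weakly decreasing sequence of positive integers) in which the first occurrence of each distinct part size may be overlined; an overlined part $\overline{a}$ has size $a$ for all comparisons and arithmetic. $|\lambda|$ denotes the sum of the parts of $\lambda$. $\lfloor x\rfloor$ is the largest integer not exceeding $x$. *)

From mathcomp Require Import all_boot.
Set Implicit Arguments. Unset Strict Implicit. Unset Printing Implicit Defensive.

(* An overpartition is encoded as a list of parts (size, overlined?), listed
   in weakly decreasing order of size. *)
Definition opart := (nat * bool)%type.
Definition overpartition := seq opart.

(* Well-formedness: weakly decreasing sizes, positive parts, and an overlined
   part must be the first occurrence of its size. *)
Definition is_overpartition (l : overpartition) : bool :=
  sorted geq (map fst l) &&
  all (fun p : opart => 0 < p.1) l &&
  [forall i : 'I_(size l),
     (nth (0, false) l i).2 ==>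
     [forall j : 'I_(size l), (j < i) ==> ((nth (0, false) l j).1 != (nth (0, false) l i).1)]].

Definition op_weight (l : overpartition) : nat := sumn (map fst l).

Definition largest (l : overpartition) : nat := (head (0, false) l).1.
Definition smallest (l : overpartition) : nat := (last (0, false) l).1.

Definition in_Gbar (t : nat) (l : overpartition) : bool :=
  is_overpartition l && (l != [::]) &&
  (largest l - smallest l <= t) &&
  ((largest l - smallest l == t) ==> ~~ (head (0, false) l).2).

Definition in_Pbar (t : nat) (l : overpartition) : bool :=
  is_overpartition l && (l != [::]) &&
  all (fun p : opart => p.1 <= t) l &&
  all (fun p : opart => (p.1 == t) ==> ~~ p.2) l.

Definition phi_s (t : nat) (l : overpartition) : nat := smallest l %/ t.

(* k = the index with pi_k >= (s+1)t > pi_{k+1} (0 if none); since the parts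
   are weakly decreasing, this is the number of parts >= (s+1)t. *)
Definition phi_k (t : nat) (l : overpartition) : nat :=
  count (fun p : opart => (phi_s t l).+1 * t <= p.1) l.

Definition phi (t : nat) (l : overpartition) : overpartition :=
  let s := phi_s t l in
  let k := phi_k t l in
  let ell := size l in
  [seq p <- nseq (s * (ell - k) + s.+1 * k) (t, false)
            ++ [seq (p.1 - s * t, p.2) | p <- drop k l]
            ++ [seq (p.1 - s.+1 * t, p.2) | p <- take k l]
     | p.1 != 0].

From mathcomp Require Import all_boot.
From mathcomp Require Import zify.

Set Implicit Arguments.
Unset Strict Implicit.
Unset Printing Implicit Defensive.

(* With s = floor(pi_l / t), the parts of pi below (s+1)t lie in [st, (s+1)t)
   and the others in [(s+1)t, pi_1] with pi_1 <= pi_l + t < (s+2)t, so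
   subtracting st, resp. (s+1)t, leaves parts below t and moves weight
   st per small part and (s+1)t per large part into copies of t.  Placing the
   shifted large parts after the shifted small ones keeps the list weakly
   decreasing, because pi_1 - (s+1)t <= pi_l - st; equality forces
   pi_1 - pi_l = t, and then no part of size pi_1 is overlined. *)

Definition opart_before (x y : opart) : bool :=
  (y.1 <= x.1) && (y.2 ==> (x.1 != y.1)).

Lemma first_overlinedE (l : overpartition) :
  [forall i : 'I_(size l),
     (nth (0, false) l i).2 ==>
     [forall j : 'I_(size l),
        (j < i) ==> ((nth (0, false) l j).1 != (nth (0, false) l i).1)]]
  = pairwise (fun x y : opart => y.2 ==> (x.1 != y.1)) l.
Proof.
apply/forallP/(pairwiseP (0, false)) => [ovl j i lt_j lt_i lt_ji | ovl i].
  apply/implyP => ov_i.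
  by move: (ovl (Ordinal lt_i)) => /implyP/(_ ov_i)/forallP/(_ (Ordinal lt_j))/implyP; apply.
apply/implyP => ov_i; apply/forallP => j; apply/implyP => lt_ji.
by have := ovl j i (ltn_ord j) (ltn_ord i) lt_ji; rewrite ov_i.
Qed.

Lemma is_overpartitionE (l : overpartition) :
  is_overpartition l = pairwise opart_before l && all (fun p : opart => 0 < p.1) l.
Proof.
have geq_trans : transitive geq by move=> a b c /= le_ab le_bc; apply: leq_trans le_bc le_ab.
rewrite /is_overpartition first_overlinedE sorted_pairwise // pairwise_map.
by rewrite /opart_before pairwise_relI andbAC.
Qed.

Lemma overlined_largest (x0 y : opart) (l : overpartition) :
  pairwise opart_before (x0 :: l) -> y \in x0 :: l -> y.2 -> y.1 = x0.1 -> x0.2.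
Proof.
rewrite pairwise_cons inE => /andP[/allP before_x0 _] /orP[/eqP-> // | y_l] ov_y eq_y.
by move: (before_x0 y y_l); rewrite /opart_before ov_y eq_y eqxx andbF.
Qed.

Lemma pairwise_take_count (T : eqType) (r : rel T) (P : pred T) (l : seq T) :
  (forall x y, r x y -> P y -> P x) -> pairwise r l ->
  all P (take (count P l) l) && all (predC P) (drop (count P l) l).
Proof.
move=> P_down; elim: l => [|x l IHl] //= /andP[r_x /IHl IH].
case P_x: (P x) => /=; first by rewrite P_x.
have notP_l : all (predC P) l.
  apply/allP => y y_l /=; apply/negP => P_y.
  by move: P_x; rewrite (P_down x y (allP r_x y y_l) P_y).
have -> : count P l = 0 by apply/eqP; rewrite eqn0Ngt -has_count -all_predC.
by rewrite /= P_x.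
Qed.

Definition shift (c : nat) (q : overpartition) : overpartition :=
  [seq (p.1 - c, p.2) | p <- q].

Lemma op_weight_shift (c : nat) (q : overpartition) :
  all (fun p : opart => c <= p.1) q -> op_weight (shift c q) + c * size q = op_weight q.
Proof.
elim: q => [|x q IHq] /=; first by rewrite muln0.
by move=> /andP[le_cx /IHq]; rewrite /op_weight /= mulnS; lia.
Qed.

Lemma pairwise_before_shift (c : nat) (q : overpartition) :
  all (fun p : opart => c <= p.1) q ->
  pairwise opart_before (shift c q) = pairwise opart_before q.
Proof.
rewrite pairwise_map; apply: eq_in_pairwise => x y le_cx le_cy.
by rewrite /opart_before /= leq_sub2rE // eqn_sub2rE.
Qed.

Lemma op_weight_filter_nonzero (w : overpartition) :
  op_weight [seq p <- w | p.1 != 0] = op_weight w.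
Proof. by rewrite /op_weight; elim: w => [|x w IHw] //=; case: eqP => [->|_] /=; rewrite IHw. Qed.

Lemma in_Pbar_nseq_cat (t n : nat) (q : overpartition) :
  all (fun p : opart => p.1 < t) q -> pairwise opart_before q ->
  0 < op_weight (nseq n (t, false) ++ q) ->
  in_Pbar t [seq p <- nseq n (t, false) ++ q | p.1 != 0].
Proof.
move=> lt_q before_q weight_pos.
set w := nseq n (t, false) ++ q.
have before_w : pairwise opart_before w.
  rewrite pairwise_cat before_q andbT; apply/andP; split.
    apply/allrelP => x y /nseqP[-> _] /(allP lt_q) lt_y.
    by rewrite /opart_before /= ltnW // gtn_eqF ?implybT.
  by elim: n {w weight_pos} => //= n ->; rewrite all_nseq /opart_before /= leqnn orbT.
have le_w : all (fun p : opart => p.1 <= t) w.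
  by rewrite all_cat all_nseq leqnn orbT; apply: sub_all lt_q => p /ltnW.
have ov_w : all (fun p : opart => (p.1 == t) ==> ~~ p.2) w.
  by rewrite all_cat all_nseq /= implybT orbT; apply: sub_all lt_q => p /ltn_eqF->.
have filter_nz a : all a w -> all a [seq p <- w | p.1 != 0].
  by move=> /allP a_w; apply/allP => p; rewrite mem_filter => /andP[_ /a_w].
rewrite /in_Pbar is_overpartitionE pairwise_filter //=.
rewrite (filter_nz _ le_w) (filter_nz _ ov_w) !andbT.
apply/andP; split; first by apply/allP => p; rewrite mem_filter lt0n => /andP[].
by apply: contraTneq weight_pos => w0; rewrite -op_weight_filter_nonzero -/w w0.
Qed.

Section Phi.

Variables (t : nat) (x0 : opart) (l : overpartition).
Hypothesis t_gt0 : 0 < t.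
Hypothesis x0_gt0 : 0 < x0.1.
Hypothesis before_pi : pairwise opart_before (x0 :: l).
Hypothesis spread_le : x0.1 - (last x0 l).1 <= t.
Hypothesis spread_eq : (x0.1 - (last x0 l).1 == t) ==> ~~ x0.2.

Let pi := x0 :: l.
Let M := x0.1.
Let m := (last x0 l).1.
Let s := m %/ t.
Let large (p : opart) := s.+1 * t <= p.1.
Let k := count large pi.
Let hi := take k pi.
Let lo := drop k pi.
Let unfiltered_phi :=
  nseq (s * size lo + s.+1 * size hi) (t, false) ++ shift (s * t) lo ++ shift (s.+1 * t) hi.

Lemma parts_between : all (fun p : opart => m <= p.1 <= M) pi.
Proof.
have le_M : all (fun p : opart => p.1 <= M) pi.
  by move: before_pi; rewrite /= leqnn => /andP[/sub_all-> // p /andP[]].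
have ge_m : all (fun p : opart => m <= p.1) pi.
  move: before_pi; rewrite /pi lastI pairwise_rcons all_rcons leqnn => /andP[ge _].
  by apply: sub_all ge => p /andP[].
by rewrite all_predI; apply/andP.
Qed.

Lemma hi_lo_split : all large hi && all (predC large) lo.
Proof.
apply: pairwise_take_count before_pi => x y /andP[le_yx _] le_y.
exact: leq_trans le_y le_yx.
Qed.

Lemma lo_between : all (fun p : opart => s * t <= p.1 < s.+1 * t) lo.
Proof.
apply/allP => p p_lo; case/andP: hi_lo_split => _ /allP/(_ p p_lo).
rewrite /= /large -ltnNge => ->; rewrite andbT.
have /andP[le_mp _] := allP parts_between p (mem_drop p_lo).
by rewrite (leq_trans _ le_mp) // leq_divM.
Qed.

Lemma hi_between : all (fun p : opart => s.+1 * t <= p.1 <= M) hi.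
Proof.
apply/allP => p p_hi; case/andP: hi_lo_split => /allP/(_ p p_hi) large_p _.
apply/andP; split; first exact: large_p.
by case/andP: (allP parts_between p (mem_take p_hi)).
Qed.

Lemma lo_ge : all (fun p : opart => s * t <= p.1) lo.
Proof. by apply: sub_all lo_between => p /andP[]. Qed.

Lemma hi_ge : all (fun p : opart => s.+1 * t <= p.1) hi.
Proof. by apply: sub_all hi_between => p /andP[]. Qed.

Lemma shift_lo_small : all (fun p : opart => p.1 < t) (shift (s * t) lo).
Proof.
apply/allP => _ /mapP[p /(allP lo_between) /andP[ge_p lt_p] ->] /=.
by move: lt_p; rewrite mulSn; lia.
Qed.

Lemma shift_hi_small : all (fun p : opart => p.1 < t) (shift (s.+1 * t) hi).
Proof.
have m_lt : m < s.+1 * t by apply: ltn_ceil.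
apply/allP => _ /mapP[p /(allP hi_between) /andP[ge_p le_p] ->] /=.
by move: spread_le; rewrite -/M -/m; lia.
Qed.

Lemma shift_lo_before_hi :
  allrel opart_before (shift (s * t) lo) (shift (s.+1 * t) hi).
Proof.
rewrite allrel_mapl allrel_mapr; apply/allrelP => [[a ?] [b ?]] a_lo b_hi.
have /andP[ge_a _] := allP lo_between _ a_lo.
have /andP[le_ma _] := allP parts_between _ (mem_drop a_lo).
have /andP[ge_b le_bM] := allP hi_between _ b_hi.
move: spread_le; rewrite /= -/M -/m mulSn in ge_a le_ma ge_b le_bM * => spread_le_t.
rewrite /opart_before /=; apply/andP; split; first lia.
apply/implyP => ov_b; apply/negP => /eqP eq_ab.
have [bM spread_t] : b = M /\ M - m = t by lia.
have := overlined_largest before_pi (mem_take b_hi) ov_b bM.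
by move: spread_eq; rewrite -/M -/m spread_t eqxx /= => /negbTE->.
Qed.

Lemma phi_unfiltered : phi t pi = [seq p <- unfiltered_phi | p.1 != 0].
Proof. by rewrite /unfiltered_phi size_drop size_takel // count_size. Qed.

Lemma op_weight_unfiltered_phi : op_weight unfiltered_phi = op_weight pi.
Proof.
have -> : op_weight pi = op_weight hi + op_weight lo.
  by rewrite -{1}(cat_take_drop k pi) /op_weight map_cat sumn_cat.
rewrite -(op_weight_shift lo_ge) -(op_weight_shift hi_ge) /unfiltered_phi.
rewrite {1}/op_weight !map_cat !sumn_cat map_nseq sumn_nseq /op_weight /=.
by rewrite mulnDr !mulnA ![t * _]mulnC; lia.
Qed.

Lemma phi_weight : op_weight (phi t pi) = op_weight pi.
Proof. by rewrite phi_unfiltered op_weight_filter_nonzero op_weight_unfiltered_phi. Qed.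

Lemma phi_in_Pbar : in_Pbar t (phi t pi).
Proof.
have before_lo_hi : pairwise opart_before (hi ++ lo) by rewrite cat_take_drop.
rewrite phi_unfiltered; apply: in_Pbar_nseq_cat.
- by rewrite all_cat shift_lo_small shift_hi_small.
- rewrite pairwise_cat shift_lo_before_hi !pairwise_before_shift ?lo_ge ?hi_ge //.
  by move: before_lo_hi; rewrite pairwise_cat => /and3P[_ -> ->].
- by rewrite -/unfiltered_phi op_weight_unfiltered_phi /op_weight /= addn_gt0 x0_gt0.
Qed.

End Phi.

Theorem mainTheorem2 (t : nat) (ht : 0 < t) (pi : overpartition) :
  in_Gbar t pi -> in_Pbar t (phi t pi) /\ op_weight (phi t pi) = op_weight pi.
Proof.
rewrite /in_Gbar is_overpartitionE.
move=> /andP[/andP[/andP[/andP[before pos] nonempty] spread_le] spread_eq].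
case: pi nonempty before pos spread_le spread_eq => // x0 l _ before /andP[x0_gt0 _].
by split; [apply: phi_in_Pbar | apply: phi_weight].
Qed.
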